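(* Let $n\ge 1$ and let $w\in\mathbb{R}^{[n]\times[n]}$ be a real matrix. Let $(\beta_1,\dots,\beta_n)$ be the numbers $\left(\max_{j\in[n]}(w_{i,j}-w_{i,i})\right)_{i\in[n]}$ arranged in non-increasing order, i.e. $\beta_1\ge\beta_2\ge\dots\ge\beta_n$. Let $\mathbf{p}^*=(p^*_1,\dots,p^*_n)$ be the minimum subsidy vector for $w$. Then for every $r=1,2,\dots,n$, the $r$-th largest value among $p^*_1,\dots,p^*_n$ is at most $\sum_{\ell=1}^{n-r}\beta_\ell$ (an empty sum being $0$).
   Context: For a permutation $\sigma$ of $[n]=\{1,\dots,n\}$ let $P^\sigma=\{\mathbf{p}\in\mathbb{R}_{\ge0}^n \mid w_{i,\sigma(i)}+p_{\sigma(i)}\ge w_{i,j}+p_j \ \forall i,j\in[n]\}$. A permutation $\sigma$ is a maximum weight permutation for $w$ if it maximizes $\sum_{i=1}^n w_{i,\sigma(i)}$. For a maximum weight permutation $\sigma$, $P^\sigma$ is nonempty and has a unique coordinatewise-minimal element; this element does not depend on the choice of the maximum weight permutation $\sigma$, and it is called the minimum subsidy vector for $w$. (The identity permutation need not be a maximum weight permutation.) *)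

From mathcomp Require Import all_boot all_order all_algebra all_fingroup.
Set Implicit Arguments. Unset Strict Implicit. Unset Printing Implicit Defensive.
Import Order.TTheory GRing.Theory Num.Theory.
Local Open Scope ring_scope.

Definition perm_weight (R : realFieldType) (n : nat) (w : 'M[R]_n) (s : 'S_n) : R :=
  \sum_(i < n) w i (s i).

Definition is_max_weight_perm (R : realFieldType) (n : nat) (w : 'M[R]_n) (s : 'S_n) : Prop :=
  forall s' : 'S_n, perm_weight w s' <= perm_weight w s.

Definition in_Psigma (R : realFieldType) (n : nat) (w : 'M[R]_n) (s : 'S_n)
    (p : 'I_n -> R) : Prop :=
  (forall i, 0 <= p i) /\
  (forall i j : 'I_n, w i j + p j <= w i (s i) + p (s i)).

Definition is_min_elt_Psigma (R : realFieldType) (n : nat) (w : 'M[R]_n) (s : 'S_n)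
    (p : 'I_n -> R) : Prop :=
  in_Psigma w s p /\ (forall q, in_Psigma w s q -> forall i, p i <= q i).

(* beta_i = max_j (w_{i,j} - w_{i,i}); the term j = i equals 0, so seeding the
   iterated max with 0 does not change its value. *)
Definition beta (R : realFieldType) (n : nat) (w : 'M[R]_n) (i : 'I_n) : R :=
  \big[Num.max/0]_(j < n) (w i j - w i i).

Definition sort_desc (R : realFieldType) (n : nat) (f : 'I_n -> R) : seq R :=
  sort (fun x y : R => y <= x) [seq f i | i <- enum 'I_n].

(* Let p be the minimal element of P^s and N a proper subset of indices.  Some
   x outside N either has p x = 0 or is indifferent between its own item and an
   item j of N, so that p x <= beta x + p j: otherwise the complement of N would
   be s-stable with strict slack everywhere, and p could be lowered on it.
   Adding such an x repeatedly yields n - r + 1 indices whose subsidies are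
   bounded by sums of at most n - r distinct betas, hence by the sum of the
   n - r largest betas; so at most r - 1 subsidies exceed that sum. *)

From mathcomp Require Import all_boot all_order all_algebra all_fingroup.
From mathcomp Require Import zify lra.
Import Order.TTheory GRing.Theory Num.Theory.
Local Open Scope ring_scope.
Set Implicit Arguments. Unset Strict Implicit.

Section SortDesc.
Variables (R : realFieldType) (n : nat).
Implicit Types (f : 'I_n -> R) (c : R).

Lemma size_sort_desc f : size (sort_desc f) = n.
Proof. by rewrite size_sort size_map size_enum_ord. Qed.

Lemma perm_sort_desc f : perm_eq (sort_desc f) [seq f i | i <- enum 'I_n].
Proof. by rewrite perm_sort. Qed.

Lemma nth_sort_desc_le f i j : (i <= j)%N -> (j < n)%N ->
  nth 0 (sort_desc f) j <= nth 0 (sort_desc f) i.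
Proof.
move=> le_ij lt_jn.
have ge_trans : transitive (fun x y : R => y <= x).
  by move=> x y z /= le_xy le_yz; exact: le_trans le_yz le_xy.
apply: (sorted_leq_nth ge_trans (@lexx _ R)); rewrite ?inE ?size_sort_desc //.
- by apply: sort_sorted => x y; exact: le_total.
- exact: leq_ltn_trans lt_jn.
Qed.

Lemma sort_desc_ge0 f : (forall i, 0 <= f i) -> forall l, 0 <= nth 0 (sort_desc f) l.
Proof.
move=> f_ge0 l; have [lt_ln|] := ltnP l n; last first.
  by move=> le_nl; rewrite nth_default ?size_sort_desc.
have := @mem_nth _ 0 (sort_desc f) l; rewrite size_sort_desc => /(_ lt_ln).
by rewrite (perm_mem (perm_sort_desc f)) => /mapP[i _ ->].
Qed.

Lemma count_sort_desc f (a : pred R) :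
  count a (sort_desc f) = #|[set i | a (f i)]|.
Proof.
have /seq.permP-> := perm_sort_desc f.
rewrite count_map cardsE cardE -size_filter /enum_mem -filter_predI.
by congr size; apply: eq_filter => i; rewrite /= andbT.
Qed.

Lemma sum_sort_desc f (g : R -> R) :
  \sum_(i < n) g (f i) = \sum_(l < n) g (nth 0 (sort_desc f) l).
Proof.
transitivity (\sum_(0 <= l < size (sort_desc f)) g (nth 0 (sort_desc f) l)).
  by rewrite -(big_nth 0 xpredT) (perm_big _ (perm_sort_desc f)) big_map big_enum.
by rewrite size_sort_desc big_mkord.
Qed.

(* With c the #|A|-th largest value, f <= (f - c)^+ + c, and (f - c)^+ summed
   over all indices is exactly the excess of the #|A| largest values over c. *)
Lemma sum_le_sum_sort_desc f (A : {set 'I_n}) :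
  \sum_(i in A) f i <= \sum_(l < #|A|) nth 0 (sort_desc f) l.
Proof.
set k := #|A|; set s := sort_desc f; set c := s`_k.-1.
have le_kn : (k <= n)%N by rewrite -[n]card_ord max_card.
pose excess x := Num.max (x - c) 0.
have excess_ge0 x : 0 <= excess x by rewrite le_max lexx orbT.
have le_excess x : x <= excess x + c by rewrite -lerBlDr le_max lexx.
have sum_excess : \sum_(i < n) excess (f i) = \sum_(l < k) (s`_l - c).
  rewrite sum_sort_desc -/s -(big_mkord xpredT (fun l => excess s`_l)).
  rewrite -(big_mkord xpredT (fun l => s`_l - c)) (big_cat_nat (leq0n k) le_kn) /=.
  rewrite [X in _ + X]big_nat_cond [X in _ + X]big1 ?addr0; last first.
    move=> l /andP[/andP[le_kl lt_ln] _]; rewrite /excess max_r // subr_le0.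
    by apply: nth_sort_desc_le; lia.
  apply: eq_big_nat => l /andP[_ lt_lk]; rewrite /excess max_l // subr_ge0.
  by apply: nth_sort_desc_le; lia.
have sum_excessA : \sum_(i in A) excess (f i) <= \sum_(i < n) excess (f i).
  by rewrite [X in _ <= X](bigID [in A]) /= lerDl sumr_ge0 // => i _; exact: excess_ge0.
apply: (le_trans (y := \sum_(i in A) excess (f i) + k%:R * c)).
  rewrite /k -sum1_card natr_sum mulr_suml -big_split ler_sum // => i _.
  by rewrite mul1r le_excess.
apply: le_trans (lerD sum_excessA (lexx _)) _.
by rewrite sum_excess sumrB sumr_const card_ord mulr_natl subrK.
Qed.

Lemma nth_sort_desc_le_bound f c r : (0 < r <= n)%N ->
  (n - r < #|[set i | (f i <= c)%R]|)%N -> nth 0 (sort_desc f) r.-1 <= c.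
Proof.
move=> /andP[r_gt0 le_rn] many_le; rewrite leNgt; apply/negP => lt_c.
set s := sort_desc f.
have size_top : size (take r s) = r by rewrite size_takel ?size_sort_desc.
have : (r <= count (fun x => (c < x)%R) s)%N.
  rewrite -(cat_take_drop r s) count_cat.
  have /eqP-> : count (fun x => c < x) (take r s) == r.
    rewrite -{2}size_top -all_count; apply/(all_nthP 0) => l.
    rewrite size_top => lt_lr; rewrite nth_take //.
    by apply: lt_le_trans lt_c _; apply: nth_sort_desc_le; lia.
  exact: leq_addr.
have count_gt : count (predC (fun x => x <= c)) s = count (fun x => c < x) s.
  by apply: eq_count => x; rewrite /= -ltNge.
have := count_predC (fun x => x <= c) s.
rewrite count_gt size_sort_desc !count_sort_desc in many_le *.
lia.
Qed.

End SortDesc.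

Lemma exists_pos_lower_bound (R : realFieldType) (I : finType) (P : pred I) (F : I -> R) :
  (forall i, P i -> 0 < F i) -> exists2 e, 0 < e & forall i, P i -> e <= F i.
Proof.
move=> F_gt0; exists (\big[Num.min/1]_(i | P i) F i); last by move=> i; exact: bigmin_le_cond.
by apply: (big_ind (fun x => 0 < x)) => // x y x_gt0 y_gt0; rewrite lt_min x_gt0.
Qed.

Lemma ler_sum_prefix (R : numDomainType) (g : nat -> R) a b :
  (a <= b)%N -> (forall l, 0 <= g l) -> \sum_(l < a) g l <= \sum_(l < b) g l.
Proof.
move=> le_ab g_ge0; rewrite (big_ord_widen b g le_ab).
by rewrite [X in _ <= X](bigID (fun l : 'I_b => (l < a)%N)) /= lerDl sumr_ge0.
Qed.

Lemma perm_stable_mem (T : finType) (s : {perm T}) (A : {set T}) :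
  {in A, forall x, s x \in A} -> forall x, (s x \in A) = (x \in A).
Proof.
move=> sA; have sAE : s @: A = A.
  apply/eqP; rewrite eqEcard card_imset ?leqnn ?andbT; last exact: perm_inj.
  by apply/subsetP => _ /imsetP[x xA ->]; exact: sA.
by move=> x; rewrite -{1}sAE mem_imset //; exact: perm_inj.
Qed.

Section Beta.
Variables (R : realFieldType) (n : nat) (w : 'M[R]_n).

Lemma beta_ge0 i : 0 <= beta w i.
Proof. exact: bigmax_ge_id. Qed.

Lemma le_beta i j : w i j - w i i <= beta w i.
Proof. by rewrite /beta (bigD1 j) //= le_max lexx. Qed.

End Beta.

Section MinimalSubsidy.
Variables (R : realFieldType) (n : nat) (w : 'M[R]_n) (s : 'S_n) (p : 'I_n -> R).
Hypothesis p_min : is_min_elt_Psigma w s p.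

Lemma min_subsidy_no_slack_set (T : {set 'I_n}) : T != set0 ->
  (forall x, x \in T -> 0 < p x) ->
  (forall x j, x \in T -> j \notin T -> w x j + p j < w x x + p x) -> False.
Proof.
have [[p_ge0 pP] p_le] := p_min.
move=> /set0Pn[x0 x0T] p_gt0 slack.
have sT : forall x, (s x \in T) = (x \in T).
  apply: perm_stable_mem => x xT; apply: contraT => sxT.
  by have := lt_le_trans (slack x _ xT sxT) (pP x x); rewrite ltxx.
have [|e1 e1_gt0 le_e1] := exists_pos_lower_bound
  (P := fun xj : 'I_n * 'I_n => (xj.1 \in T) && (xj.2 \notin T))
  (F := fun xj => w xj.1 (s xj.1) + p (s xj.1) - (w xj.1 xj.2 + p xj.2)).
  by move=> [x j] /andP[/= xT jT]; rewrite subr_gt0 (lt_le_trans (slack x j xT jT)).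
have [e2 e2_gt0 le_e2] := exists_pos_lower_bound p_gt0.
pose e := Num.min e1 e2.
have [e_gt0 e_le1 e_le2] : [/\ 0 < e, e <= e1 & e <= e2].
  by rewrite lt_min e1_gt0 e2_gt0 !ge_min !lexx orbT.
pose q x := if x \in T then p x - e else p x.
have qP : in_Psigma w s q.
  split=> [x | i j]; rewrite /q.
    by case: ifP => // xT; have := le_e2 x xT; lra.
  rewrite sT; case: (boolP (i \in T)) => iT; case: (boolP (j \in T)) => jT;
    try by have := pP i j; lra.
  by have := le_e1 (i, j); rewrite /= iT jT => /(_ isT); lra.
have := p_le q qP x0; rewrite /q x0T; lra.
Qed.

Lemma min_subsidy_extend (N : {set 'I_n}) : N != setT ->
  exists2 x, x \notin N &
    (p x = 0 \/ exists2 j, j \in N & w x x + p x <= w x j + p j).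
Proof.
move=> NT; have [[p_ge0 _] _] := p_min.
have [/existsP[x /andP[xN]]|] := boolP [exists x, (x \notin N) && ((p x == 0) ||
    [exists j, (j \in N) && (w x x + p x <= w x j + p j)])].
  move=> /orP[/eqP px0 | /existsP[j /andP[jN le_j]]]; exists x => //; first by left.
  by right; exists j.
rewrite negb_exists => /forallP none.
exfalso; apply: (@min_subsidy_no_slack_set (~: N)) => [|x|x j]; rewrite ?inE.
- by apply: contra NT; rewrite -subset0 subCset setC0 subTset.
- move=> xN; have := none x; rewrite xN /= negb_or => /andP[px0 _].
  by rewrite lt_def px0 p_ge0.
- move=> xN /negbNE jN; have := none x; rewrite xN /= negb_or negb_exists.
  by move=> /andP[_ /forallP/(_ j)]; rewrite jN /= -ltNge.
Qed.

Lemma min_subsidy_bounded_set k : (k <= n)%N ->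
  exists N : {set 'I_n}, exists2 M : {set 'I_n},
    [/\ #|N| = k, M \subset N & (#|M| <= k.-1)%N] &
    forall x, x \in N -> p x <= \sum_(y in M) beta w y.
Proof.
elim: k => [_ | k IH lt_kn].
  by exists set0, set0; rewrite ?cards0 ?sub0set // => x; rewrite inE.
have [N [M [cardN MN cardM] bounded]] := IH (ltnW lt_kn).
have NT : N != setT.
  by move: lt_kn; rewrite -cardN; apply: contraTneq => ->; rewrite cardsT card_ord ltnn.
have [x xN [px0 | [j jN le_j]]] := min_subsidy_extend NT.
  exists (x |: N), M.
    by rewrite cardsU1 xN cardN (subset_trans MN (subsetU1 x N)); split=> //; lia.
  move=> y /setU1P[-> | /bounded //].
  by rewrite px0 sumr_ge0 // => z _; exact: beta_ge0.
have k_gt0 : (0 < k)%N by rewrite -cardN; apply/card_gt0P; exists j.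
have ltMk : (#|M| < k)%N by rewrite -(prednK k_gt0) ltnS.
have xM : x \notin M by apply: contra xN => /(subsetP MN).
exists (x |: N), (x |: M).
  by rewrite !cardsU1 xN xM cardN setUS //=; split=> //; lia.
rewrite big_setU1 //= => y /setU1P[-> | /bounded].
  by have := bounded j jN; have := le_beta w x j; lra.
by have := beta_ge0 w x; lra.
Qed.

End MinimalSubsidy.

Theorem lemma3 (R : realFieldType) (n : nat) (w : 'M[R]_n) (s : 'S_n) (p : 'I_n -> R) :
  (0 < n)%N ->
  is_max_weight_perm w s ->
  is_min_elt_Psigma w s p ->
  forall r : nat, (1 <= r <= n)%N ->
    nth 0 (sort_desc p) r.-1 <= \sum_(l < n - r) nth 0 (sort_desc (beta w)) l.
Proof.
(* Maximality of s only serves to make P^s nonempty; the minimal p is given. *)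
move=> _ _ p_min r r_range.
have le_rn : ((n - r).+1 <= n)%N by lia.
have [N [M [cardN _ cardM] bounded]] := min_subsidy_bounded_set p_min le_rn.
apply: nth_sort_desc_le_bound => //; rewrite -cardN subset_leq_card //.
apply/subsetP => x xN; rewrite inE.
apply: le_trans (bounded x xN) (le_trans (sum_le_sum_sort_desc _ M) _).
by apply: ler_sum_prefix => // l; apply/sort_desc_ge0/beta_ge0.
Qed.
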